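(* For a space $X$ the following are equivalent: (i) For every vector space $E$, each convex-valued totally-l.s.c. mapping $\Phi:X\rightrightarrows E$ has a selection which is continuous with respect to the finite topology on $E$. (ii) Each open cover of $X$ has a canonical map. (iii) Each open cover of $X$ has an index-subordinated partition of unity.
   Context: Set-valued mappings $\Phi:X\rightrightarrows E$ assign nonempty subsets; convex-valued means each $\Phi(x)$ is convex; totally-l.s.c. means $\{x:\Phi(x)\cap U\neq\emptyset\}$ is open for every subset $U\subseteq E$. The finite topology on $E$: $U$ open iff $U\cap L$ open in each finite-dimensional linear subspace $L$ (Euclidean topology). For a set $V$, $\mathbf{c}_{00}(V)$ is the vector space of finitely supported functions $V\to\mathbb{R}$, each $v\in V$ identified with its characteristic function. A simplicial complex $\Sigma$ on vertex set $V$ is a family of nonempty finite subsets of $V$ closed under nonempty subsets; its geometric realisation $|\Sigma|=\bigcup_{\sigma\in\Sigma}\operatorname{conv}(\sigma)\subseteq\mathbf{c}_{00}(V)$ carries the Whitehead topology ($U$ open iff $U\cap\operatorname{conv}(\sigma)$ is open in the Euclidean simplex $\operatorname{conv}(\sigma)$ for each $\sigma$), which is the subspace topology of the finite topology. For a cover $\mathcal{U}$ of $X$ (a family of nonempty subsets with union $X$), its nerve is $\mathcal{N}(\mathcal{U})=\{\sigma\subseteq\mathcal{U}: \sigma \text{ finite nonempty},\ \bigcap\sigma\ne\emptyset\}$. A canonical map for $\mathcal{U}$ is a continuous $f:X\to|\mathcal{N}(\mathcal{U})|$ such that $\{x: f(x)(U)\neq0\}\subseteq U$ for every $U\in\mathcal{U}$.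 A partition of unity indexed by $\mathcal{A}$ is a family of continuous $\xi_\alpha:X\to[0,1]$ with $\sum_\alpha\xi_\alpha(x)=1$ for all $x$; it is index-subordinated to an open cover $\{U_\alpha\}_{\alpha\in\mathcal{A}}$ if $\{x:\xi_\alpha(x)\ne0\}\subseteq U_\alpha$ for every $\alpha$. *)

From HB Require Import structures.
From mathcomp Require Import all_boot all_order all_algebra.
From mathcomp Require Import all_classical all_reals.
From mathcomp Require Import topology normedtype numfun esum convex.
Set Implicit Arguments. Unset Strict Implicit. Unset Printing Implicit Defensive.
Import Order.TTheory GRing.Theory Num.Theory numFieldNormedType.Exports.
Local Open Scope classical_set_scope.
Local Open Scope ring_scope.

(* Finite topology on the linear subspace [S] of a real vector space [E]
   (S is the ambient subspace: [setT] for E itself, c00(V) inside V -> R).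
   U is open iff U ∩ L is (Euclidean-)open in every finite-dimensional
   linear subspace L of S.  The Euclidean topology of L is written out through
   coordinates: for every finite family v_1..v_n of vectors of S, the preimage
   of U under the linear map t |-> \sum_i t_i v_i : R^n -> E is open in R^n.
   (Every finite family spans a finite-dimensional L, and for a basis of L this
   map is a homeomorphism R^n ~ L.) *)
Definition finite_open {R : realType} {E : lmodType R} (S : set E) (U : set E)
  : Prop :=
  forall (n : nat) (v : 'I_n -> E), (forall i, S (v i)) ->
    open [set t : 'rV[R]_n | U (\sum_(i < n) t ord0 i *: v i)].

Definition finite_continuous {R : realType} {X : topologicalType}
  {E : lmodType R} (S : set E) (f : X -> E) : Prop :=
  forall U : set E, finite_open S U -> open (f @^-1` U).

Definition totally_lsc {X : topologicalType} {E : Type} (Phi : X -> set E)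
  : Prop :=
  forall U : set E, open [set x | Phi x `&` U !=set0].

Definition open_cover {X : topologicalType} (CU : set (set X)) : Prop :=
  (forall W, CU W -> open W /\ W !=set0) /\ \bigcup_(W in CU) W = setT.

Definition open_icover {X : topologicalType} {A : Type} (U : A -> set X)
  : Prop :=
  (forall a, open (U a) /\ U a !=set0) /\ \bigcup_(a in setT) U a = setT.

(* c00(CU): finitely supported real functions on the vertex set CU
   (vertices W identified with their characteristic functions \1_[set W]). *)
Definition c00 {R : realType} {X : Type} (CU : set (set X))
  (g : set X -> R) : Prop :=
  finite_set [set W | g W != 0] /\ [set W | g W != 0] `<=` CU.

(* g lies in the geometric realisation |N(CU)| of the nerve of CU:
   g is a convex combination of the vertices of some simplex sigma of the
   nerve, i.e. a finite nonempty family of members of CU with nonempty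
   intersection. *)
Definition in_nerve_realisation {R : realType} {X : Type} (CU : set (set X))
  (g : set X -> R) : Prop :=
  exists (n : nat) (sigma : 'I_n -> set X) (lam : 'I_n -> R),
    [/\ (0 < n)%N, (forall i, CU (sigma i)),
        (exists x, forall i, sigma i x),
        (forall i, 0 <= lam i) /\ \sum_(i < n) lam i = 1 &
        g = \sum_(i < n) lam i *: (\1_[set sigma i] : set X -> R)].

Definition canonical_map {R : realType} {X : topologicalType}
  (CU : set (set X)) (f : X -> (set X -> R)) : Prop :=
  [/\ forall x, in_nerve_realisation CU (f x),
      finite_continuous (c00 CU) f &
      forall W, CU W -> [set x | f x W != 0] `<=` W].

Definition subordinated_pu {R : realType} {X : topologicalType}
  {A : choiceType} (U : A -> set X) (xi : A -> X -> R) : Prop :=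
  [/\ forall a, continuous (xi a),
      forall a x, 0 <= xi a x <= 1,
      forall x, (\esum_(a in setT) (xi a x)%:E = 1%:E)%E &
      forall a, [set x | xi a x != 0] `<=` U a].

(* (iii) => (ii): index a partition of unity by the cover itself.  To make it
   locally finite, cut every function at half the pointwise maximum
   m(x) = sup_a xi_a(x), which is continuous and positive, and renormalise: near
   x0 only the finitely many xi_a that are not small at x0 survive the cut.  The
   canonical map is then x |-> sum_W eta_W(x) W, a point of the simplex spanned
   by the members of the cover that contain x.
   (ii) => (i): by total lower semicontinuity the fibres Phi^-1(e) form an open
   cover.  Choosing a point e_W with W = Phi^-1(e_W) and extending W |-> e_W
   linearly to c00 gives a map that is continuous for the finite topologies;
   composed with a canonical map it is a selection, because only fibres
   containing x carry weight at x and Phi(x) is convex.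
   (i) => (iii): a selection of x |-> {finitely supported probability vectors
   carried by the members of the cover containing x} is a partition of unity. *)

From HB Require Import structures.
From mathcomp Require Import all_boot all_order all_algebra.
From mathcomp Require Import all_classical all_reals.
From mathcomp Require Import ereal topology normedtype numfun esum convex lra.
Import Order.TTheory GRing.Theory Num.Theory numFieldNormedType.Exports.
Local Open Scope classical_set_scope.
Local Open Scope ring_scope.
Set Implicit Arguments. Unset Strict Implicit. Unset Printing Implicit Defensive.

Lemma fsumT_seq (I : choiceType) (V : nmodType) (F : I -> V) (s : seq I) :
  uniq s -> (forall i, F i != 0 -> i \in s) ->
  \sum_(i \in [set: I]) F i = \sum_(i <- s) F i.
Proof.
move=> us Fs; rewrite (fsbigE s) //; first by under eq_bigl do rewrite in_setT.
by move=> i _; apply: contraNeq; exact: Fs.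
Qed.

Lemma sumr_neq0_term (I : eqType) (V : nmodType) (s : seq I) (F : I -> V) :
  \sum_(i <- s) F i != 0 -> exists2 i, i \in s & F i != 0.
Proof.
apply: contraNP => /forall2NP F0; apply/eqP; rewrite big1_seq // => i /= si.
by have [//|/negP/negPn/eqP] := F0 i.
Qed.

Lemma ler_psum_term (R : numDomainType) (I : eqType) (s : seq I) (F : I -> R) i :
  uniq s -> i \in s -> (forall j, 0 <= F j) -> F i <= \sum_(j <- s) F j.
Proof. by move=> us si F0; rewrite (bigD1_seq i) //= lerDl sumr_ge0. Qed.

Lemma convex_set_sum (R : realType) (E : lmodType R)
  (C : set (convex_lmodType E)) (I : eqType) (s : seq I) (lam : I -> R)
  (p : I -> E) :
  convex_set C -> (forall i, 0 <= lam i) -> \sum_(i <- s) lam i = 1 ->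
  (forall i, i \in s -> lam i != 0 -> C (p i)) ->
  C (\sum_(i <- s) lam i *: p i).
Proof.
move=> cC; elim: s lam => [|i s IH] lam lam0.
  by rewrite big_nil => /eqP; rewrite eq_sym oner_eq0.
rewrite !big_cons => lam1 Cp.
set m := \sum_(j <- s) lam j in lam1.
have m0 : 0 <= m by exact: sumr_ge0.
have Cpi : lam i != 0 -> C (p i) by apply: Cp; rewrite mem_head.
have [mz|mnz] := eqVneq m 0.
  have lamz j : j \in s -> lam j = 0.
    by move=> sj; move/eqP: mz; rewrite psumr_eq0 // => /allP/(_ j sj)/eqP.
  rewrite big1_seq ?addr0 => [|j /andP[_ /lamz ->]]; last by rewrite scale0r.
  have li : lam i = 1 by rewrite -lam1 mz addr0.
  by rewrite li scale1r; apply: Cpi; rewrite li oner_eq0.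
have Cq : C (\sum_(j <- s) (lam j / m) *: p j).
  apply: IH => [j||j sj]; first by rewrite divr_ge0.
    by rewrite -mulr_suml divff.
  by rewrite mulf_eq0 negb_or => /andP[lj _]; apply: Cp; rewrite // inE sj orbT.
have -> : \sum_(j <- s) lam j *: p j = m *: \sum_(j <- s) (lam j / m) *: p j.
  by rewrite scaler_sumr; apply: eq_bigr => j _; rewrite scalerA mulrC divfK.
have [liz|linz] := eqVneq (lam i) 0.
  have m1 : m = 1 by rewrite -lam1 liz add0r.
  by rewrite liz scale0r add0r {1}m1 scale1r.
have li1 : lam i <= 1 by rewrite -lam1 lerDl.
have mE : m = 1 - lam i by rewrite -lam1 addrAC subrr add0r.
set q := \sum_(j <- s) _ in Cq *.
have := cC (p i) q (Itv01 (lam0 i) li1); rewrite !inE mE.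
by move=> /(_ (Cpi linz) Cq).
Qed.

Lemma esum_seq (R : realType) (A : choiceType) (g : A -> R) (s : seq A) :
  uniq s -> (forall a, 0 <= g a) -> (forall a, g a != 0 -> a \in s) ->
  (\esum_(a in [set: A]) (g a)%:E = (\sum_(a <- s) g a)%:E)%E.
Proof.
move=> us g0 gs.
rewrite (@eq_esum _ _ _ _ (fun a => if a \in [set` s] then (g a)%:E else 0%E));
  last first.
  move=> a _; case: ifPn => // sa; congr (_%:E); apply/eqP.
  by apply: contraNT sa => /gs; rewrite in_setE.
rewrite -esum_mkcond esum_fset ?finite_seq // => [|a _]; last by rewrite lee_fin.
by rewrite -fsbig_seq // sumEFin.
Qed.

Lemma sum_seq_le_esum (R : realType) (A : choiceType) (g : A -> R) (s : seq A) :
  uniq s -> ((\sum_(a <- s) g a)%:E <= \esum_(a in [set: A]) (g a)%:E)%E.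
Proof.
move=> us; apply: esum_ge; exists [set` s].
  by split => //; exact: finite_seq.
by rewrite -fsbig_seq // sumEFin.
Qed.

Lemma esum1_approx (R : realType) (A : choiceType) (g : A -> R) (e : R) :
  (\esum_(a in [set: A]) (g a)%:E = 1%:E)%E -> 0 < e ->
  exists2 s : seq A, uniq s & 1 - e < \sum_(a <- s) g a.
Proof.
move=> g1 e0; have : ((1 - e)%:E < \esum_(a in [set: A]) (g a)%:E)%E.
  by rewrite g1 lte_fin gtrBl.
case/ereal_sup_gt => _ [D [Dfin _] <-].
rewrite fsbig_finite // sumEFin lte_fin => ltD.
by exists (finmap.enum_fset (fset_set D)) => //; exact: finmap.fset_uniq.
Qed.

Lemma near_all_seq (T : Type) (F : set_system T) (I : eqType) (s : seq I)
  (P : I -> T -> Prop) : Filter F ->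
  (forall i, i \in s -> \forall x \near F, P i x) ->
  \forall x \near F, forall i, i \in s -> P i x.
Proof.
move=> FF; elim: s => [|i s IH] Ps; first by apply: nearW => x j; rewrite in_nil.
have Pi := Ps i (mem_head _ _).
have {IH}Pss : \forall x \near F, forall j, j \in s -> P j x.
  by apply: IH => j sj; apply: Ps; rewrite inE sj orbT.
by apply: filterS2 Pi Pss => x Pix Psx j; rewrite inE => /orP[/eqP->|/Psx].
Qed.

Lemma continuous_sum (K : numFieldType) (V : normedModType K)
  (X : topologicalType) (I : Type) (s : seq I) (g : I -> X -> V) :
  (forall i, continuous (g i)) -> continuous (fun x => \sum_(i <- s) g i x).
Proof.
move=> gc; elim: s => [|i s IH].
  by under [fun x => _]funext do rewrite big_nil; exact: cst_continuous.
under [fun x => _]funext do rewrite big_cons.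
by move=> x; apply: continuousD; [exact: gc|exact: IH].
Qed.

Lemma continuous_row (K : numFieldType) (X : topologicalType) (n : nat)
  (g : 'I_n -> X -> K) :
  (forall i, continuous (g i)) -> continuous (fun y => \row_i g i y).
Proof.
move=> gc x T /= [P nP PT].
have : \forall y \near x, forall i j, P i j ((\row_k g k y) i j).
  apply: filter_forall => i; apply: filter_forall => j.
  have := nP i j; rewrite mxE => /(gc j x) nPj.
  by near=> y; rewrite mxE; near: y.
by apply: filterS => y /PT.
Unshelve. all: by end_near.
Qed.

Lemma finite_continuous_local_comb (R : realType) (X : topologicalType)
  (E : lmodType R) (S : set E) (f : X -> E) :
  (forall x0 : X, exists n (v : 'I_n -> E) (g : 'I_n -> X -> R),
     [/\ forall i, S (v i), forall i, continuous (g i) &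
         \forall y \near x0, f y = \sum_(i < n) g i y *: v i]) ->
  finite_continuous S f.
Proof.
move=> loc U oU; rewrite openE => x0 Ux0.
have [n [v [g [Sv gc fE]]]] := loc x0.
have oT := oU n v Sv.
have Tx0 : [set t : 'rV[R]_n | U (\sum_(i < n) t ord0 i *: v i)] (\row_i g i x0).
  by rewrite /=; under eq_bigr do rewrite mxE; rewrite -(nbhs_singleton fE).
have := continuous_row gc (open_nbhs_nbhs (conj oT Tx0)).
apply: filterS2 fE => y fy; rewrite /preimage /= fy.
by under eq_bigr do rewrite mxE.
Qed.

Lemma indic_set1_neq0 (R : numDomainType) (T : eqType) (a b : T) :
  (\1_[set a] : T -> R) b != 0 -> b = a.
Proof. by rewrite indicE in_set1; case: (b =P a) => // _; rewrite eqxx. Qed.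

Lemma c00_indic (R : realType) (X : Type) (CU : set (set X)) (W : set X) :
  CU W -> c00 CU (\1_[set W] : set X -> R).
Proof.
move=> CUW; split => [|W' /indic_set1_neq0 -> //].
by apply: sub_finite_set (finite_set1 W) => W' /indic_set1_neq0.
Qed.

Section linear_extension.
Variables (R : realType) (I : choiceType) (E : lmodType R) (e : I -> E).

Definition lin_extension (g : I -> R) : E := \sum_(i \in [set: I]) g i *: e i.

Lemma lin_extension_seq (g : I -> R) (s : seq I) :
  uniq s -> (forall i, g i != 0 -> i \in s) ->
  lin_extension g = \sum_(i <- s) g i *: e i.
Proof.
move=> us gs; apply: fsumT_seq => // i gei; apply: gs.
by apply: contraNneq gei => ->; rewrite scale0r.
Qed.

Lemma lin_extension_indicator (i : I) : lin_extension \1_[set i] = e i.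
Proof.
rewrite (@lin_extension_seq _ [:: i]) // => [|j /indic_set1_neq0 ->].
  by rewrite big_seq1 indicE in_set1 eqxx scale1r.
exact: mem_head.
Qed.

Lemma lin_extension_sum (n : nat) (t : 'I_n -> R) (v : 'I_n -> I -> R) :
  (forall k, finite_set [set i | v k i != 0]) ->
  lin_extension (\sum_(k < n) t k *: v k) =
  \sum_(k < n) t k *: lin_extension (v k).
Proof.
move=> vfin; set D := \bigcup_(k in [set: 'I_n]) [set i | v k i != 0].
have Dfin : finite_set D by apply: bigcup_finite => // k _; exact: vfin.
set sD := finmap.enum_fset (fset_set D).
have uD : uniq sD := finmap.fset_uniq _.
have vD k i : v k i != 0 -> i \in sD.
  by move=> vki; rewrite in_fset_set // inE; exists k.
rewrite (lin_extension_seq uD); last first.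
  move=> i; rewrite fct_sumE => /sumr_neq0_term[k _].
  by rewrite /= mulf_eq0 negb_or => /andP[_ /vD].
under eq_bigr do rewrite fct_sumE /= scaler_suml.
rewrite exchange_big /=; apply: eq_bigr => k _.
rewrite (lin_extension_seq uD (vD k)) scaler_sumr.
by apply: eq_bigr => i _; rewrite scalerA.
Qed.

End linear_extension.

Lemma finite_continuous_lin_extension (R : realType) (X : topologicalType)
  (I : choiceType) (E : lmodType R) (e : I -> E) (S : set (I -> R))
  (f : X -> I -> R) :
  (forall g, S g -> finite_set [set i | g i != 0]) -> finite_continuous S f ->
  finite_continuous setT (fun x => lin_extension e (f x)).
Proof.
move=> Sfin fc V oV; apply: (fc (lin_extension e @^-1` V)) => n v Sv.
suff -> : [set t : 'rV[R]_n |
           (lin_extension e @^-1` V) (\sum_(k < n) t ord0 k *: v k)] =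
          [set t | V (\sum_(k < n) t ord0 k *: lin_extension e (v k))].
  exact: oV.
by apply/seteqP; split => t; rewrite /= lin_extension_sum // => k; exact/Sfin/Sv.
Qed.

Lemma continuous_eval_finite_continuous (R : realType) (X : topologicalType)
  (A : Type) (F : X -> A -> R) (a : A) :
  finite_continuous setT F -> continuous (fun x => F x a).
Proof.
move=> Fc; apply/continuousP => O oO.
apply: (Fc [set g : A -> R | O (g a)]) => n v _.
have vc : continuous (fun t : 'rV[R]_n => \sum_(k < n) t ord0 k * v k a).
  apply: continuous_sum => k t.
  apply: (@continuousM _ _ (fun t : 'rV[R]_n => t ord0 k) (fun=> v k a)).
    exact: coord_continuous.
  exact: cst_continuous.
move/continuousP: vc => /(_ O oO); congr open.
by apply/seteqP; split => t /=; rewrite fct_sumE.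
Qed.

Lemma in_nerve_realisation_sum (R : realType) (X : Type) (CU : set (set X))
  (I : eqType) (s : seq I) (W : I -> set X) (w : I -> R) (x : X) :
  (forall i, CU (W i)) -> (forall i, 0 <= w i) -> \sum_(i <- s) w i = 1 ->
  (forall i, i \in s -> W i x) ->
  in_nerve_realisation CU (\sum_(i <- s) w i *: \1_[set W i]).
Proof.
case: s => [|i0 s] CUW w0 w1 Wx.
  by move: w1; rewrite big_nil => /eqP; rewrite eq_sym oner_eq0.
exists (size (i0 :: s)), (fun k => W (nth i0 (i0 :: s) k)),
  (fun k => w (nth i0 (i0 :: s) k)); split => //.
- by exists x => k; apply: Wx; rewrite mem_nth.
- by split => [//|]; rewrite -w1 (big_nth i0) big_mkord.
- by rewrite (big_nth i0) big_mkord.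
Qed.

Section locally_finite_partitions.
Variables (R : realType) (X : topologicalType) (A : choiceType).

Definition locally_finite_family (psi : A -> X -> R) :=
  forall x0 : X, exists2 s : seq A, uniq s &
    \forall y \near x0, forall a, psi a y != 0 -> a \in s.

Definition locally_finite_pu (eta : A -> X -> R) :=
  [/\ forall a, continuous (eta a), forall a x, 0 <= eta a x,
      locally_finite_family eta & forall x, \sum_(a \in [set: A]) eta a x = 1].

Variable psi : A -> X -> R.
Hypotheses (psi_cont : forall a, continuous (psi a))
  (psi_ge0 : forall a x, 0 <= psi a x) (psi_pos : forall x, exists a, 0 < psi a x)
  (psi_lf : locally_finite_family psi).

Lemma near_fsumT (x0 : X) : exists2 s : seq A, uniq s &
  \forall y \near x0, \sum_(a \in [set: A]) psi a y = \sum_(a <- s) psi a y.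
Proof.
have [s us sP] := psi_lf x0; exists s => //.
by apply: filterS sP => y; exact: fsumT_seq.
Qed.

Lemma continuous_fsumT : continuous (fun x => \sum_(a \in [set: A]) psi a x).
Proof.
move=> x0; have [s us sE] := near_fsumT x0.
have Es : \forall y \near x0,
    \sum_(a <- s) psi a y = \sum_(a \in [set: A]) psi a y.
  by apply: filterS sE => y ->.
apply: cvg_trans (near_eq_cvg Es) _; rewrite (nbhs_singleton sE).
exact: continuous_sum.
Qed.

Lemma fsumT_gt0 (x : X) : 0 < \sum_(a \in [set: A]) psi a x.
Proof.
have [s us /nbhs_singleton sx] := psi_lf x; rewrite (fsumT_seq us sx).
have [a psia] := psi_pos x.
apply: (lt_le_trans psia); rewrite ler_psum_term //; exact: sx _ (lt0r_neq0 psia).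
Qed.

Definition pu_normalize (a : A) (x : X) :=
  psi a x / \sum_(b \in [set: A]) psi b x.

Lemma pu_normalize_neq0 (a : A) (x : X) :
  pu_normalize a x != 0 -> psi a x != 0.
Proof. by rewrite mulf_eq0 negb_or => /andP[]. Qed.

Lemma locally_finite_pu_normalize : locally_finite_pu pu_normalize.
Proof.
split => [a x|a x|x0|x].
- apply: (@continuousM _ _ (psi a) (fun x => (\sum_(b \in [set: A]) psi b x)^-1)).
    exact: psi_cont.
  by apply: continuousV; [rewrite gt_eqF // fsumT_gt0 | exact: continuous_fsumT].
- by rewrite divr_ge0 // ltW // fsumT_gt0.
- have [s us sP] := psi_lf x0; exists s => //.
  by apply: filterS sP => y sy a /pu_normalize_neq0/sy.
- by rewrite /pu_normalize -mulr_fsuml divff // gt_eqF // fsumT_gt0.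
Qed.

End locally_finite_partitions.

Section pu_max.
Variables (R : realType) (X : topologicalType) (A : choiceType)
  (xi : A -> X -> R).
Hypotheses (xi_cont : forall a, continuous (xi a))
  (xi_ge0 : forall a x, 0 <= xi a x)
  (xi_sum1 : forall x, (\esum_(a in [set: A]) (xi a x)%:E = 1%:E)%E).

Lemma pu_small_outside (x0 : X) (e : R) : 0 < e ->
  exists2 s : seq A, uniq s &
    \forall y \near x0, forall a, a \notin s -> xi a y < e.
Proof.
move=> e0; have e20 : 0 < e / 2 by rewrite divr_gt0.
have [s us sx0] := esum1_approx (xi_sum1 x0) e20.
exists s => //; have := @continuous_sum _ _ _ _ s _ xi_cont x0.
move/cvgrPdist_lt => /(_ _ e20); apply: filterS => y sy a sa.
have := sum_seq_le_esum (fun b => xi b y) (_ : uniq (a :: s)).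
rewrite /= sa us xi_sum1 lee_fin big_cons => /(_ isT).
move: sy; rewrite ltr_distlC => /andP[sy1 sy2]; lra.
Qed.

Lemma pu_exists_pos (x : X) : exists a, 0 < xi a x.
Proof.
apply: contrapT => xi0; have : (\esum_(a in [set: A]) (xi a x)%:E = 0)%E.
  apply: esum1 => a _; congr (_%:E); apply/eqP; rewrite eq_le xi_ge0 andbT.
  by rewrite leNgt; apply/negP => xia; apply: xi0; exists a.
by rewrite xi_sum1 => /eqP; rewrite eqe oner_eq0.
Qed.

Definition pu_max (x : X) := sup [set xi a x | a in [set: A]].

Lemma has_sup_pu (x : X) : has_sup [set xi a x | a in [set: A]].
Proof.
have [a _] := pu_exists_pos x; split; first by exists (xi a x), a.
exists 1 => _ [b _ <-].
have := sum_seq_le_esum (fun c => xi c x) (_ : uniq [:: b]).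
by rewrite xi_sum1 lee_fin big_seq1 => /(_ isT).
Qed.

Lemma pu_max_ge (a : A) (x : X) : xi a x <= pu_max x.
Proof. by apply: (sup_upper_bound (has_sup_pu x)); exists a. Qed.

Lemma pu_max_gt0 (x : X) : 0 < pu_max x.
Proof.
by have [a xia] := pu_exists_pos x; exact: lt_le_trans xia (pu_max_ge a x).
Qed.

Lemma pu_max_adherent (x : X) (e : R) :
  0 < e -> exists a, pu_max x - e < xi a x.
Proof.
by move=> e0; have [_ [a _ <-] ?] := sup_adherent e0 (has_sup_pu x); exists a.
Qed.

Lemma continuous_pu_max : continuous pu_max.
Proof.
move=> x; apply/cvgrPdist_lt => e e0; have e20 : 0 < e / 2 by rewrite divr_gt0.
have [a0 xa0] := pu_max_adherent x e20.
have [s us small] := pu_small_outside x e20.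
have near_s : \forall y \near x, forall a, a \in s -> `|xi a x - xi a y| < e / 2.
  by apply: near_all_seq => a _; move/cvgrPdist_lt: (@xi_cont a x); exact.
have near_a0 : \forall y \near x, `|xi a0 x - xi a0 y| < e / 2.
  by move/cvgrPdist_lt: (@xi_cont a0 x); exact.
apply: filterS (filterI near_s (filterI near_a0 small)) => y [ys [ya0 yout]].
have lo : pu_max x - e < pu_max y.
  apply: lt_le_trans (pu_max_ge a0 y).
  by move: ya0; rewrite ltr_distlC => /andP[? ?]; lra.
have hi : pu_max y <= pu_max x + e / 2.
  apply: sup_le_ub; first by case: (has_sup_pu y).
  move=> _ [a _ <-]; have [sa|sa] := boolP (a \in s).
    have := pu_max_ge a x; have := ys a sa.
    by rewrite ltr_distlC => /andP[? ?] ?; lra.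
  by have := yout a sa; have := pu_max_gt0 x; lra.
by rewrite ltr_distlC; apply/andP; split; lra.
Qed.

Definition pu_cut (a : A) (x : X) := Num.max 0 (xi a x - pu_max x / 2).

Lemma continuous_pu_cut (a : A) : continuous (pu_cut a).
Proof.
move=> x; apply: (@continuous_max _ _ (fun=> 0) (fun x => xi a x - pu_max x / 2)).
  exact: cst_continuous.
apply: continuousB; first exact: xi_cont.
apply: (@continuousM _ _ pu_max (fun=> 2^-1)); first exact: continuous_pu_max.
exact: cst_continuous.
Qed.

Lemma pu_cut_ge0 (a : A) (x : X) : 0 <= pu_cut a x.
Proof. by rewrite /pu_cut le_max lexx. Qed.

Lemma pu_cut_neq0 (a : A) (x : X) : pu_cut a x != 0 -> xi a x != 0.
Proof.
rewrite /pu_cut; apply: contraNN => /eqP xia; apply/eqP/max_idPl.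
by rewrite xia sub0r oppr_le0 divr_ge0 // ltW // pu_max_gt0.
Qed.

Lemma pu_cut_exists_pos (x : X) : exists a, 0 < pu_cut a x.
Proof.
have m2 : 0 < pu_max x / 2 by rewrite divr_gt0 // pu_max_gt0.
have [a xa] := pu_max_adherent x m2.
by exists a; rewrite /pu_cut lt_max subr_gt0; apply/orP; right; lra.
Qed.

(* Near x0 the maximum stays above pu_max x0 / 2, whereas every xi a with
   a outside s stays below pu_max x0 / 4, hence below half the maximum. *)
Lemma locally_finite_pu_cut : locally_finite_family pu_cut.
Proof.
move=> x0; set m := pu_max x0; have m0 : 0 < m := pu_max_gt0 x0.
have m4 : 0 < m / 4 by rewrite divr_gt0.
have [s us small] := pu_small_outside x0 m4.
exists s => //; have m2 : 0 < m / 2 by rewrite divr_gt0.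
move: (@continuous_pu_max x0) => /cvgrPdist_lt => /(_ _ m2).
apply: filterS2 small => y ys ym a; apply: contraTT => sa.
rewrite negbK /pu_cut; apply/eqP/max_idPl.
by move: ym (ys a sa); rewrite ltr_distlC -/m => /andP[? ?] ?; lra.
Qed.

Lemma locally_finite_pu_refinement : exists eta : A -> X -> R,
  locally_finite_pu eta /\ forall a x, eta a x != 0 -> xi a x != 0.
Proof.
exists (pu_normalize pu_cut); split => [|a x /pu_normalize_neq0/pu_cut_neq0 //].
apply: locally_finite_pu_normalize.
- exact: continuous_pu_cut.
- exact: pu_cut_ge0.
- exact: pu_cut_exists_pos.
- exact: locally_finite_pu_cut.
Qed.

End pu_max.

Definition selection_property (R : realType) (X : topologicalType) : Prop :=
  forall (E : lmodType R) (Phi : X -> set E),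
    (forall x, Phi x !=set0) ->
    (forall x, convex_set (Phi x : set (convex_lmodType E))) ->
    totally_lsc Phi ->
    exists f : X -> E, (forall x, Phi x (f x)) /\ finite_continuous setT f.

Definition canonical_map_property (R : realType) (X : topologicalType) : Prop :=
  forall CU : set (set X), open_cover CU ->
    exists f : X -> (set X -> R), canonical_map CU f.

Definition pu_property (R : realType) (X : topologicalType) : Prop :=
  forall (A : choiceType) (U : A -> set X), open_icover U ->
    exists xi : A -> X -> R, subordinated_pu U xi.

Section nerve_map.
Variables (R : realType) (X : topologicalType) (CU : set (set X))
  (eta : CU -> X -> R).
Hypotheses (eta_pu : locally_finite_pu eta)
  (eta_sub : forall a x, eta a x != 0 -> val a x).

Definition nerve_map (x : X) : set X -> R :=
  lin_extension (fun a : CU => \1_[set val a]) (eta^~ x).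

Lemma nerve_map_realisation (x : X) : in_nerve_realisation CU (nerve_map x).
Proof.
have [_ eta0 eta_lf eta1] := eta_pu; have [s us /nbhs_singleton sx] := eta_lf x.
set s' := [seq a <- s | eta a x != 0].
have us' : uniq s' by rewrite filter_uniq.
have s'x a : eta a x != 0 -> a \in s' by move=> ea; rewrite mem_filter ea sx.
rewrite /nerve_map (lin_extension_seq _ us' s'x).
apply: (@in_nerve_realisation_sum _ _ _ _ _ _ _ x) => [a|a||a].
- exact: set_mem (valP a).
- exact: eta0.
- by rewrite -(fsumT_seq us' s'x).
- by rewrite mem_filter => /andP[/eta_sub].
Qed.

Lemma finite_continuous_nerve_map : finite_continuous (c00 CU) nerve_map.
Proof.
have [eta_cont _ eta_lf _] := eta_pu.
apply: finite_continuous_local_comb => x0; have [s us sP] := eta_lf x0.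
exists (size s), (fun k => \1_[set val (tnth (in_tuple s) k)]),
  (fun k => eta (tnth (in_tuple s) k)); split => [k|k|].
- exact/c00_indic/set_mem/valP.
- exact: eta_cont.
apply: filterS sP => y sy; rewrite /nerve_map (lin_extension_seq _ us sy).
exact: (big_tuple _ _ (in_tuple s)).
Qed.

Lemma nerve_map_support (W : set X) : CU W -> [set x | nerve_map x W != 0] `<=` W.
Proof.
move=> CUW x /=; have [_ _ eta_lf _] := eta_pu.
have [s us /nbhs_singleton sx] := eta_lf x.
rewrite /nerve_map (lin_extension_seq _ us sx) fct_sumE => /sumr_neq0_term[a _].
rewrite /= mulf_eq0 negb_or => /andP[/eta_sub xa /indic_set1_neq0 ->] //.
Qed.

End nerve_map.

Lemma canonical_map_of_pu (R : realType) (X : topologicalType) :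
  pu_property R X -> canonical_map_property R X.
Proof.
move=> pu CU [CUo CUcov].
have Uo : open_icover (fun a : CU => val a).
  split => [a|]; first exact/CUo/set_mem/valP.
  apply/seteqP; split => // x _; have : (\bigcup_(W in CU) W) x by rewrite CUcov.
  by case=> W CUW Wx; exists (SigSub (mem_set CUW)).
have [xi [xi_cont xi01 xi1 xi_sub]] := pu _ _ Uo.
have xi0 a x : 0 <= xi a x by have /andP[] := xi01 a x.
have [eta [eta_pu eta_xi]] := locally_finite_pu_refinement xi_cont xi0 xi1.
have eta_sub a x : eta a x != 0 -> val a x by move/eta_xi; exact: xi_sub.
exists (nerve_map eta); split.
- exact: nerve_map_realisation.
- exact: finite_continuous_nerve_map.
- exact: nerve_map_support.
Qed.

Section fibre_cover.
Variables (R : realType) (X : topologicalType) (E : lmodType R)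
  (Phi : X -> set E).
Hypotheses (Phi_neq0 : forall x, Phi x !=set0)
  (Phi_convex : forall x, convex_set (Phi x : set (convex_lmodType E)))
  (Phi_lsc : totally_lsc Phi).

Definition fibre_cover : set (set X) :=
  [set [set x | Phi x e] | e in [set e | exists x, Phi x e]].

Definition fibre_point (W : set X) : E := xget 0 [set e | [set x | Phi x e] = W].

Lemma fibre_pointP (W : set X) :
  fibre_cover W -> [set x | Phi x (fibre_point W)] = W.
Proof.
by move=> [e _ eW]; rewrite /fibre_point; case: xgetP => [y _ //|/(_ e)].
Qed.

Lemma open_cover_fibre_cover : open_cover fibre_cover.
Proof.
split => [_ [e [x Phixe] <-]|].
  split; last by exists x.
  rewrite (_ : [set x | Phi x e] = [set x | Phi x `&` [set e] !=set0]).
    exact: Phi_lsc.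
  apply/seteqP; split => y /=; first by move=> Phiye; exists e; split.
  by case=> e' [Phiye' <-].
apply/seteqP; split => // x _; have [e Phixe] := Phi_neq0 x.
by exists [set y | Phi y e] => //; exists e => //; exists x.
Qed.

Lemma canonical_map_selection (f : X -> set X -> R) :
  canonical_map fibre_cover f ->
  forall x, Phi x (lin_extension fibre_point (f x)).
Proof.
move=> [f_nerve _ f_sub] x.
have [n [sigma [lam [_ CUsigma _ [lam0 lam1] fx]]]] := f_nerve x.
rewrite fx lin_extension_sum => [|k]; last exact: (c00_indic R (CUsigma k)).1.
under eq_bigr do rewrite lin_extension_indicator.
apply: convex_set_sum => // k _ lamk.
suff : sigma k x by rewrite -{1}(fibre_pointP (CUsigma k)).
apply: (f_sub _ (CUsigma k)); rewrite /= fx fct_sumE /=.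
have kterm : lam k <= \sum_(i < n) lam i * \1_[set sigma i] (sigma k).
  rewrite (bigD1 k) //= indicE in_set1 eqxx mulr1 lerDl.
  by apply: sumr_ge0 => i _; rewrite mulr_ge0 // indicE ler0n.
by rewrite gt_eqF // (lt_le_trans _ kterm) // lt_def lamk lam0.
Qed.

End fibre_cover.

Lemma selection_of_canonical_map (R : realType) (X : topologicalType) :
  canonical_map_property R X -> selection_property R X.
Proof.
move=> cm E Phi Phi_neq0 Phi_convex Phi_lsc.
have [f f_can] := cm _ (open_cover_fibre_cover Phi_neq0 Phi_lsc).
exists (fun x => lin_extension (fibre_point Phi) (f x)); split.
  exact: canonical_map_selection.
have [_ f_cont _] := f_can.
by apply: (finite_continuous_lin_extension _ _ f_cont) => g [].
Qed.

Section subordinated_weights.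
Variables (R : realType) (X : topologicalType) (A : choiceType)
  (U : A -> set X).

Definition subordinated_weights (x : X) : set (A -> R) :=
  [set g | exists2 s : seq A, uniq s &
    [/\ forall a, g a != 0 -> a \in s, forall a, 0 <= g a,
        forall a, g a != 0 -> U a x & \sum_(a <- s) g a = 1]].

Lemma subordinated_weights_neq0 (x : X) : (exists a, U a x) ->
  subordinated_weights x !=set0.
Proof.
move=> [a Uax]; exists \1_[set a], [:: a] => //; split => [b|b|b|].
- by move/indic_set1_neq0 ->; rewrite mem_head.
- by rewrite indicE ler0n.
- by move/indic_set1_neq0 ->.
- by rewrite big_seq1 indicE in_set1 eqxx.
Qed.

Lemma convex_subordinated_weights (x : X) :
  convex_set (subordinated_weights x : set (convex_lmodType (A -> R))).
Proof.
move=> g1 g2 p; rewrite !in_setE.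
move=> -[s1 us1 [s1g1 g10 Ug1 g11]] [s2 us2 [s2g2 g20 Ug2 g21]].
have -> : conv p g1 g2 = (p%:num *: g1 + (1 - p%:num) *: g2 : A -> R) by [].
set h := (_ + _ : A -> R).
have hE a : h a = p%:num * g1 a + (1 - p%:num) * g2 a by [].
have hneq0 a : h a != 0 -> g1 a != 0 \/ g2 a != 0.
  rewrite hE; apply: contraNP => /not_orP[/negP/negPn/eqP -> /negP/negPn/eqP ->].
  by rewrite !mulr0 addr0.
set t := undup (s1 ++ s2); have ut : uniq t := undup_uniq _.
have tg1 a : g1 a != 0 -> a \in t.
  by move=> /s1g1; rewrite mem_undup mem_cat => ->.
have tg2 a : g2 a != 0 -> a \in t.
  by move=> /s2g2; rewrite mem_undup mem_cat orbC => ->.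
exists t => //; split => [a /hneq0[/tg1|/tg2] //|a|a /hneq0[/Ug1|/Ug2] //|].
  by rewrite hE addr_ge0 ?mulr_ge0 ?g10 ?g20 ?subr_ge0 ?ge0 ?le1.
have sum_t (g : A -> R) s : uniq s -> (forall a, g a != 0 -> a \in s) ->
    (forall a, g a != 0 -> a \in t) -> \sum_(a <- t) g a = \sum_(a <- s) g a.
  by move=> us sg tg; rewrite -(fsumT_seq ut tg) (fsumT_seq us sg).
rewrite (eq_bigr _ (fun a _ => hE a)) big_split /= -!mulr_sumr.
rewrite (sum_t _ _ us1 s1g1 tg1) (sum_t _ _ us2 s2g2 tg2) g11 g21.
by rewrite !mulr1 addrC subrK.
Qed.

Lemma totally_lsc_subordinated_weights : (forall a, open (U a)) ->
  totally_lsc subordinated_weights.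
Proof.
move=> Uo V; rewrite openE => x0 [g [[s us [sg g0 Ug g1]] Vg]].
have : \forall y \near x0, forall a, a \in s -> g a != 0 -> U a y.
  apply: near_all_seq => a _; have [ga|/negP ?] := boolP (g a != 0).
    by apply: filterS (open_nbhs_nbhs (conj (Uo a) (Ug a ga))) => y Uay _.
  exact: nearW.
apply: filterS => y Uy; exists g; split => //; exists s => //; split => // a ga.
exact: Uy _ (sg a ga) ga.
Qed.

End subordinated_weights.

Lemma pu_of_selection (R : realType) (X : topologicalType) :
  selection_property R X -> pu_property R X.
Proof.
move=> sel A U [Uo Ucov].
have Ux x : exists a, U a x.
  have : (\bigcup_(a in setT) U a) x by rewrite Ucov.
  by case=> a _; exists a.
have [F [FW Fc]] := sel _ (@subordinated_weights R X A U)
  (fun x => @subordinated_weights_neq0 R X A U x (Ux x))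
  (@convex_subordinated_weights R X A U)
  (@totally_lsc_subordinated_weights R X A U (fun a => (Uo a).1)).
exists (fun a x => F x a); split => [a|a x|x|a x /=].
- exact: continuous_eval_finite_continuous.
- have [s us [sF F0 _ F1]] := FW x; rewrite F0 /=.
  have [->|Fxa] := eqVneq (F x a) 0; first exact: ler01.
  by rewrite -F1 ler_psum_term // sF.
- by have [s us [sF F0 _ F1]] := FW x; rewrite (esum_seq us F0 sF) F1.
- by have [s us [_ _ FU _]] := FW x; exact: FU.
Qed.

Unset Implicit Arguments.

Theorem theorem5p1 (R : realType) (X : topologicalType) :
  [<-> (* (i) *)
       (forall (E : lmodType R) (Phi : X -> set E),
          (forall x, Phi x !=set0) ->
          (forall x, convex_set (Phi x : set (convex_lmodType E))) ->
          totally_lsc Phi ->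
          exists f : X -> E,
            (forall x, Phi x (f x)) /\ finite_continuous setT f);
       (* (ii) *)
       (forall CU : set (set X), open_cover CU ->
          exists f : X -> (set X -> R), canonical_map CU f);
       (* (iii) *)
       (forall (A : choiceType) (U : A -> set X), open_icover U ->
          exists xi : A -> X -> R, subordinated_pu U xi)].
Proof.
tfae.
- by move=> sel; apply: canonical_map_of_pu; exact: pu_of_selection.
- by move=> cm; apply: pu_of_selection; exact: selection_of_canonical_map.
- by move=> pu; apply: selection_of_canonical_map; exact: canonical_map_of_pu.
Qed.
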